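(* For every $t=0,1,\dots,T-2$, $H_t(\bar I_t-\theta)>H_t(I_t)+K_t$.
   Context: Model. Fix an integer horizon $T\ge 2$, a discount factor $\alpha\in(0,1]$, and for $t=0,\dots,T-1$: unit ordering costs $c_t\in\mathbb R$, a salvage coefficient $c_T\in\mathbb R$, setup costs $K_t\ge 0$, functions $G_t:\mathbb R\to\mathbb R$, and independent nonnegative random demands $D_0,\dots,D_{T-1}$ with right-continuous distribution functions $F_t$ and finite means; all expectations appearing are assumed finite. Put $C_t(y)=(c_t-\alpha c_{t+1})y+G_t(y)+\alpha c_{t+1}E[D_t]$. Standing assumptions: (i) each $C_t$ is convex with $C_t(y)\to+\infty$ as $|y|\to\infty$; (ii) $K_t\ge \alpha K_{t+1}$ for $t=0,\dots,T-2$. Grid construction. Fix $\theta>0$, $z_m=m\theta$, $Z_\theta=\{z_m:m\in\mathbb Z\}$, $f_t(n)=F_t(z_{n+1})-F_t(z_n)$ ($n\ge -1$). $C^m_t=\min\{y: C_t(y)=\min_x C_t(x)\}$; with $z_{n_0}<C^m_t\le z_{n_0+1}$, $S^U_t=\min\{z_m\in Z_\theta: z_m\ge C^m_t,\ C_t(z_m)>C_t(z_{n_0})+K_t\}$. $s_{T-1}$ is a point with $s_{T-1}\le C^m_{T-1}$, $C_{T-1}(s_{T-1})=C_{T-1}(C^m_{T-1})+K_{T-1}$; $\bar I_{T-1}=s_{T-1}$. For $t=T-2,\dots,0$: $I_t=\max\{z_m\in Z_\theta: z_m<\min(\bar I_{t+1}-\theta,C^m_t)\}$, $\bar I_t=\max\{z_m\in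 Z_\theta: z_m\le I_t,\ C_t(z_m)>C_t(I_t)+K_t\}+\theta$. $H_{T-1}=C_{T-1}$, $S_{T-1}=C^m_{T-1}$; $V_t(y)=H_t(S_t)+K_t$ for $y<s_t$, $V_t(y)=H_t(y)$ for $y\ge s_t$. For $t=T-2,\dots,0$: $H_t(y)=C_t(y)+\alpha\sum_{n=-1}^\infty V_{t+1}(y-z_n)f_t(n)$; $S_t=\max\{z_m\in Z_\theta: I_t\le z_m\le S^U_t,\ H_t(z_m)=\min\{H_t(z_n):z_n\in Z_\theta, I_t\le z_n\le S^U_t\}\}$; $s_t=S_t$ if $K_t=0$, else $s_t=\min\{z_m\in Z_\theta:\bar I_t\le z_m\le S_t,\ H_t(z_m)\le H_t(S_t)+K_t\}$. *)

From HB Require Import structures.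
From mathcomp Require Import all_boot all_order all_algebra.
From mathcomp Require Import all_classical all_reals all_analysis.
Set Implicit Arguments. Unset Strict Implicit. Unset Printing Implicit Defensive.
Import Order.TTheory GRing.Theory Num.Theory.
Import numFieldNormedType.Exports.
Local Open Scope classical_set_scope.
Local Open Scope ring_scope.

(* The minimum / maximum of a set (xget picks the unique least / greatest
   element when it exists; the default 0 is only returned when it does not). *)
Definition minR {R : realType} (A : set R) : R :=
  xget 0 [set x | A x /\ forall y, A y -> x <= y].
Definition minZ (A : set int) : int :=
  xget 0 [set m | A m /\ forall n, A n -> (m <= n)%R].
Definition maxZ (A : set int) : int :=
  xget 0 [set m | A m /\ forall n, A n -> (n <= m)%R].

Section Model.
Variables (R : realType) (d : measure_display) (Omega : measurableType d)
  (P : probability Omega R).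
Variables (T : nat) (alpha theta : R) (c K : nat -> R) (G : nat -> R -> R)
  (D : nat -> {RV P >-> R}).

Definition Fd (t : nat) (x : R) : R := fine (P [set w | D t w <= x]).
Definition meanD (t : nat) : R := fine ('E_P[D t]).

Definition Cfun (t : nat) (y : R) : R :=
  (c t - alpha * c t.+1) * y + G t y + alpha * c t.+1 * meanD t.

Definition z (m : int) : R := m%:~R * theta.
Definition fq (t : nat) (n : int) : R := Fd t (z (n + 1)) - Fd t (z n).

Definition Cm (t : nat) : R := minR [set y | forall x, Cfun t y <= Cfun t x].
Definition n0 (t : nat) : int := xget 0 [set n | z n < Cm t <= z (n + 1)].
Definition SU (t : nat) : R :=
  z (minZ [set m | Cm t <= z m /\ Cfun t (z (n0 t)) + K t < Cfun t (z m)]).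

Record stage := Stage {
  Hf : R -> R;
  Sv : R;
  sv : R;
  Iv : R;        (* I_t (unused dummy value at t = T-1) *)
  Ibv : R
}.

Definition Vf (st : stage) (Kt : R) (y : R) : R :=
  if y < sv st then Hf st (Sv st) + Kt else Hf st y.

Definition sT1 : R :=
  xget 0 [set x | x <= Cm T.-1 /\ Cfun T.-1 x = Cfun T.-1 (Cm T.-1) + K T.-1].

Definition stage_last : stage :=
  Stage (Cfun T.-1) (Cm T.-1) sT1 sT1 sT1.

(* H_t(y) = C_t(y) + alpha * sum_{n >= -1} V_{t+1}(y - z_n) f_t(n) *)
Definition Hnext (t : nat) (st1 : stage) (y : R) : R :=
  Cfun t y + alpha *
    limn (series (fun k : nat =>
      Vf st1 (K t.+1) (y - z (k%:Z - 1)) * fq t (k%:Z - 1))).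

Definition step (t : nat) (st1 : stage) : stage :=
  let It := z (maxZ [set m | z m < Num.min (Ibv st1 - theta) (Cm t)]) in
  let Ibt := z (maxZ [set m | z m <= It /\ Cfun t It + K t < Cfun t (z m)])
             + theta in
  let Ht := Hnext t st1 in
  let St := z (maxZ [set m | It <= z m <= SU t /\
                 forall n, It <= z n <= SU t -> Ht (z m) <= Ht (z n)]) in
  let st := if K t == 0 then St
            else z (minZ [set m | Ibt <= z m <= St /\ Ht (z m) <= Ht St + K t]) in
  Stage Ht St st It Ibt.

(* stage_rec k = data of period T-1-k *)
Fixpoint stage_rec (k : nat) : stage :=
  match k with
  | 0 => stage_last
  | k'.+1 => step (T.-1 - k'.+1) (stage_rec k')
  end.

Definition stageAt (t : nat) : stage := stage_rec (T.-1 - t).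

End Model.

Definition mutually_independent {R : realType} {d} {Omega : measurableType d}
  (P : probability Omega R) (n : nat) (D : nat -> {RV P >-> R}) : Prop :=
  forall (I : seq nat) (B : nat -> set R),
    uniq I -> all (fun i => (i < n)%N) I -> (forall i, measurable (B i)) ->
    fine (P [set w | forall i, i \in I -> B i (D i w)]) =
    \prod_(i <- I) fine (P [set w | B i (D i w)]).

Definition convex_fun {R : realType} (f : R -> R) : Prop :=
  forall x y l, 0 <= l <= 1 -> f (l * x + (1 - l) * y) <= l * f x + (1 - l) * f y.

Definition coercive {R : realType} (f : R -> R) : Prop :=
  forall M, exists N, forall y, N < `|y| -> M < f y.

From HB Require Import structures.
From mathcomp Require Import all_boot all_order all_algebra.
From mathcomp Require Import all_classical all_reals all_analysis.
From mathcomp Require Import zify lra.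
Set Implicit Arguments. Unset Strict Implicit. Unset Printing Implicit Defensive.
Import Order.TTheory GRing.Theory Num.Theory.
Import numFieldNormedType.Exports.
Local Open Scope classical_set_scope.
Local Open Scope ring_scope.

(* The argument has two halves.
   (a) Below s_{t+1} - theta the function H_t is C_t plus a constant: for
       y + theta < s_{t+1} and every n >= -1 we have y - z_n <= y + theta
       < s_{t+1}, so V_{t+1}(y - z_n) = H_{t+1}(S_{t+1}) + K_{t+1} and the
       series defining H_t(y) does not depend on y.
   (b) The grid construction is well defined (every set handed to maxZ/minZ
       is nonempty and bounded, by the Archimedean property of theta and the
       coercivity of C_t), and it yields \bar I_t <= I_t < \bar I_{t+1} -
       theta, C_t(\bar I_t - theta) > C_t(I_t) + K_t and \bar I_t <= s_t;
       the last inequality propagates \bar I <= s from each stage to the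
       previous one.
   Combining, both \bar I_t - theta and I_t lie below s_{t+1} - theta, so
   H_t(\bar I_t - theta) - H_t(I_t) = C_t(\bar I_t - theta) - C_t(I_t) > K_t. *)

Lemma maxZ_spec (A : set int) (B : int) : (exists m, A m) ->
  (forall m, A m -> m <= B) -> A (maxZ A) /\ forall n, A n -> n <= maxZ A.
Proof.
move=> [m0 Am0] hB.
have ex : exists n : nat, `[< A (B - n%:Z) >].
  exists `|B - m0|%N; apply/asboolP.
  by have -> : B - `|B - m0|%N%:Z = m0 by have := hB _ Am0; lia.
case: (ex_minnP ex) => n /asboolP An minn.
apply: (@xgetI _ 0 [set m | A m /\ forall k, A k -> k <= m] (B - n%:Z)).
split=> // k Ak; have := minn `|B - k|%N; have := hB _ Ak => hk.
have -> : B - `|B - k|%N%:Z = k by lia.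
by move=> /(_ (asboolT Ak)); lia.
Qed.

Lemma minZ_spec (A : set int) (B : int) : (exists m, A m) ->
  (forall m, A m -> B <= m) -> A (minZ A) /\ forall n, A n -> minZ A <= n.
Proof.
move=> Ane hB.
have [] := @maxZ_spec [set m | A (- m)] (- B).
- by case: Ane => m Am; exists (- m); rewrite /= opprK.
- by move=> m /hB; rewrite lerNr.
move=> Amax maxP.
have spec : A (- maxZ [set m | A (- m)]) /\
    forall n, A n -> - maxZ [set m | A (- m)] <= n.
  by split=> // n An; rewrite lerNl; apply: maxP; rewrite /= opprK.
by apply: (@xgetI _ 0 [set m | A m /\ forall k, A k -> m <= k] _ spec).
Qed.

Lemma int_argmin {R : realType} (f : int -> R) (a b : int) : a <= b ->
  exists m, a <= m <= b /\ forall n, a <= n <= b -> f m <= f n.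
Proof.
move=> hab; set N := `|b - a|%N.
have eN : a + N%:Z = b by rewrite /N; lia.
case: (@arg_minP _ _ _ (@ord0 N) predT (fun i : 'I_N.+1 => f (a + (i : nat)%:Z)) isT).
move=> i _ imin; exists (a + (i : nat)%:Z); split.
  by have := ltn_ord i; lia.
move=> n hn; have nN : (`|n - a| < N.+1)%N by lia.
have := imin (Ordinal nN) isT; rewrite /=.
by have -> : a + `|n - a|%N%:Z = n by lia.
Qed.

Section Grid.
Variables (R : realType) (theta : R).
Hypothesis theta_gt0 : 0 < theta.

Lemma z_le m n : (z theta m <= z theta n) = (m <= n).
Proof. by rewrite /z ler_pM2r // ler_int. Qed.

Lemma z_add1 m : z theta (m + 1) = z theta m + theta.
Proof. by rewrite /z intrD mulrDl mul1r. Qed.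

Lemma z_opp m : z theta (- m) = - z theta m.
Proof. by rewrite /z mulrNz mulNr. Qed.

Lemma z_nat_ge0 (n : nat) : 0 <= z theta n%:Z.
Proof. by rewrite /z mulr_ge0 // ltW. Qed.

Lemma grid_unbounded (x : R) : exists n : nat, x < z theta n%:Z.
Proof.
have h0 : 0 <= `|x| / theta by rewrite divr_ge0 // ltW.
exists (Num.Def.archi_bound (`|x| / theta)).
have := archi_boundP h0; rewrite ltr_pdivrMr // => h.
by apply: le_lt_trans h; rewrite ler_norm.
Qed.

Lemma grid_bounded_above (Y : R) :
  exists B : int, forall m, z theta m <= Y -> m <= B.
Proof.
have [n hn] := grid_unbounded Y; exists n%:Z => m hm.
by rewrite -z_le; apply: (le_trans hm); exact: ltW.
Qed.

Lemma grid_bounded_below (Y : R) :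
  exists B : int, forall m, Y <= z theta m -> B <= m.
Proof.
have [n hn] := grid_unbounded (- Y); exists (- n%:Z) => m hm.
by rewrite -z_le; apply: (le_trans _ hm); rewrite z_opp lerNl; exact: ltW.
Qed.

Lemma grid_below (Y : R) : exists m, z theta m < Y.
Proof.
have [n hn] := grid_unbounded (- Y); exists (- n%:Z).
by rewrite z_opp ltrNl.
Qed.

(* A coercive function exceeds any bound at grid points far below or far
   above any level; this makes the sets defining \bar I_t and S^U_t nonempty. *)
Lemma coercive_grid_below (f : R -> R) (Y M : R) : coercive f ->
  exists m, z theta m <= Y /\ M < f (z theta m).
Proof.
move=> /(_ M) [N hN]; have [n hn] := grid_unbounded (`|N| + `|Y|).
have hp := z_nat_ge0 n; have hY := ler_norm (- Y); have hN' := ler_norm N.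
rewrite normrN in hY.
exists (- n%:Z); rewrite z_opp; split; first by have := normr_ge0 N; lra.
by apply: hN; rewrite normrN ger0_norm //; have := normr_ge0 Y; lra.
Qed.

Lemma coercive_grid_above (f : R -> R) (Y M : R) : coercive f ->
  exists m, Y <= z theta m /\ M < f (z theta m).
Proof.
move=> /(_ M) [N hN]; have [n hn] := grid_unbounded (`|N| + `|Y|).
have hp := z_nat_ge0 n; have hY := ler_norm Y; have hN' := ler_norm N.
exists n%:Z; split; first by have := normr_ge0 N; lra.
by apply: hN; rewrite ger0_norm //; have := normr_ge0 Y; lra.
Qed.

Lemma maxZ_grid_mem (A : set int) (Y : R) : (exists m, A m) ->
  (forall m, A m -> z theta m <= Y) -> A (maxZ A).
Proof.
move=> Ane AY; have [B hB] := grid_bounded_above Y.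
by have [] := maxZ_spec Ane (fun m Am => hB m (AY m Am)).
Qed.

Lemma minZ_grid_mem (A : set int) (Y : R) : (exists m, A m) ->
  (forall m, A m -> Y <= z theta m) -> A (minZ A).
Proof.
move=> Ane AY; have [B hB] := grid_bounded_below Y.
by have [] := minZ_spec Ane (fun m Am => hB m (AY m Am)).
Qed.

End Grid.

Section OneStep.
Variables (R : realType) (d : measure_display) (Omega : measurableType d)
  (P : probability Omega R) (alpha theta : R) (c K : nat -> R)
  (G : nat -> R -> R) (D : nat -> {RV P >-> R}) (t : nat) (st1 : stage R).
Hypothesis theta_gt0 : 0 < theta.
Hypothesis K_ge0 : 0 <= K t.
Hypothesis C_coercive : coercive (Cfun alpha c G D t).

Local Notation C := (Cfun alpha c G D t).
Local Notation st := (step alpha theta c K G D t st1).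

Lemma step_Iv_lt : Iv st < Ibv st1 - theta /\ Iv st < Cm alpha c G D t.
Proof.
rewrite /step /=; set A := (X in maxZ X).
suff : A (maxZ A) by rewrite /A /= lt_min => /andP.
apply: (@maxZ_grid_mem _ theta theta_gt0 _ (Num.min (Ibv st1 - theta) (Cm alpha c G D t))).
- exact: grid_below.
- by move=> m /ltW.
Qed.

Lemma step_Ibv : Ibv st <= Iv st /\ C (Iv st) + K t < C (Ibv st - theta).
Proof.
rewrite /step /= addrK; set i := maxZ [set m | _ < Num.min _ _].
set A := (X in maxZ X).
have [j_le_i C_j] : A (maxZ A).
  apply: (@maxZ_grid_mem _ theta theta_gt0 _ (z theta i)); last by move=> m [].
  exact: coercive_grid_below.
set j := maxZ A in j_le_i C_j *.
split=> //; rewrite -z_add1 // z_le //.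
have : j <= i by rewrite -(z_le theta_gt0).
have : j != i by apply/eqP => e; move: C_j; rewrite e gtrDl ltNge K_ge0.
lia.
Qed.

Lemma SU_grid : exists u, SU alpha theta c K G D t = z theta u /\
  Cm alpha c G D t <= z theta u.
Proof.
rewrite /SU; set u := minZ _; exists u; split=> //.
suff [] : [set m | Cm alpha c G D t <= z theta m /\
    C (z theta (n0 alpha theta c G D t)) + K t < C (z theta m)] u by [].
apply: (@minZ_grid_mem _ theta theta_gt0 _ (Cm alpha c G D t)); last by move=> m [].
exact: coercive_grid_above.
Qed.

Lemma step_Iv_le_Sv : Iv st <= Sv st.
Proof.
have [_ I_lt_Cm] := step_Iv_lt.
have [u [SU_u Cm_le_u]] := SU_grid.
move: I_lt_Cm; rewrite /step /= SU_u; set i := maxZ _ => I_lt_Cm.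
set H := Hnext alpha theta c K G D t st1.
set A := (X in maxZ X).
suff [/andP [] //] : A (maxZ A).
apply: (@maxZ_grid_mem _ theta theta_gt0 _ (z theta u)); last first.
  by move=> m [/andP []].
have i_le_u : i <= u by rewrite -(z_le theta_gt0); lra.
have [m [m_in m_min]] := int_argmin (fun m => H (z theta m)) i_le_u.
exists m; split; first by rewrite !z_le.
by move=> n; rewrite !z_le // => n_in; exact: m_min.
Qed.

Lemma step_Ibv_le_sv : Ibv st <= sv st.
Proof.
have [Ib_le_I _] := step_Ibv; have I_le_S := step_Iv_le_Sv.
have -> : sv st = if K t == 0 then Sv st else z theta (minZ
    [set m | Ibv st <= z theta m <= Sv st /\ Hf st (z theta m) <= Hf st (Sv st) + K t])
  by [].
case: ifP => _; first lra.
set A := (X in minZ X).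
suff [/andP [] //] : A (minZ A).
apply: (@minZ_grid_mem _ theta theta_gt0 _ (Ibv st)); last by move=> m [/andP []].
have [s S_s] : exists s, Sv st = z theta s by eexists.
exists s; split; rewrite -S_s ?lerDl //.
by rewrite lexx andbT; lra.
Qed.

(* Below s_{t+1} the value function V_{t+1} is the constant
   H_{t+1}(S_{t+1}) + K_{t+1}; since every demand point z_n with n >= -1 is
   >= -theta, the whole series defining H_t(y) is constant for
   y + theta < s_{t+1}. *)
Lemma step_Hf_diff (y1 y2 : R) : y1 + theta < sv st1 -> y2 + theta < sv st1 ->
  Hf st y1 - Hf st y2 = C y1 - C y2.
Proof.
pose L := limn (series (fun k : nat =>
  (Hf st1 (Sv st1) + K t.+1) * fq theta D t (k%:Z - 1))).
have flat y : y + theta < sv st1 -> Hf st y = C y + alpha * L.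
  move=> y_lt; rewrite /= /Hnext /L; congr (_ + alpha * limn (series _)).
  apply: funext => k; congr (_ * _); rewrite /Vf ifT //.
  have := z_nat_ge0 theta_gt0 k.
  have : z theta (k%:Z - 1) + theta = z theta k%:Z by rewrite -z_add1 // subrK.
  lra.
by move=> /flat -> /flat ->; lra.
Qed.

End OneStep.

Section BackwardRecursion.
Variables (R : realType) (d : measure_display) (Omega : measurableType d)
  (P : probability Omega R) (T : nat) (alpha theta : R) (c K : nat -> R)
  (G : nat -> R -> R) (D : nat -> {RV P >-> R}).

Local Notation stage_at := (stageAt T alpha theta c K G D).

Lemma stageAt_step t : (t < T.-1)%N ->
  stage_at t = step alpha theta c K G D t (stage_at t.+1).
Proof.
move=> tT; rewrite /stageAt.
have -> : (T.-1 - t = (T.-1 - t.+1).+1)%N by lia.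
by rewrite [LHS]/=; congr step; lia.
Qed.

Hypothesis theta_gt0 : 0 < theta.
Hypothesis K_ge0 : forall t, (t < T)%N -> 0 <= K t.
Hypothesis C_coercive : forall t, (t < T)%N -> coercive (Cfun alpha c G D t).

Lemma stageAt_Ibv_le_sv t : (t <= T.-1)%N -> Ibv (stage_at t) <= sv (stage_at t).
Proof.
rewrite leq_eqVlt => /orP [/eqP -> | tT].
  by rewrite /stageAt subnn.
rewrite stageAt_step //; apply: step_Ibv_le_sv => //.
- by apply: K_ge0; lia.
- by apply: C_coercive; lia.
Qed.

End BackwardRecursion.

Theorem lemma4p4 (R : realType) (d : measure_display) (Omega : measurableType d)
  (P : probability Omega R)
  (T : nat) (alpha theta : R) (c K : nat -> R) (G : nat -> R -> R)
  (D : nat -> {RV P >-> R}) :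
  (2 <= T)%N ->
  0 < alpha <= 1 ->
  0 < theta ->
  (forall t, (t < T)%N -> 0 <= K t) ->
  (forall t, (t < T)%N -> P [set w | D t w < 0] = 0%E) ->
  (forall t, (t < T)%N -> P.-integrable setT (EFin \o D t)) ->
  mutually_independent T D ->
  (forall t, (t < T)%N -> convex_fun (Cfun alpha c G D t)) ->
  (forall t, (t < T)%N -> coercive (Cfun alpha c G D t)) ->
  (forall t, (t <= T - 2)%N -> alpha * K t.+1 <= K t) ->
  forall t, (t <= T - 2)%N ->
    let st := stageAt T alpha theta c K G D t in
    Hf st (Ibv st - theta) > Hf st (Iv st) + K t.
Proof.
move=> T_ge2 _ theta_gt0 K_ge0 _ _ _ _ C_coercive _ t tT; cbv zeta.
have K_t := K_ge0 t ltac:(lia); have coer_t := C_coercive t ltac:(lia).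
set st1 := stageAt T alpha theta c K G D t.+1.
have Ib1_le_s1 : Ibv st1 <= sv st1 by apply: stageAt_Ibv_le_sv => //; lia.
rewrite stageAt_step; last by lia.
set st := step alpha theta c K G D t st1.
have [I_lt _] : Iv st < Ibv st1 - theta /\ Iv st < Cm alpha c G D t.
  exact: step_Iv_lt.
have [Ib_le_I C_gap] : Ibv st <= Iv st /\
    Cfun alpha c G D t (Iv st) + K t < Cfun alpha c G D t (Ibv st - theta).
  exact: step_Ibv.
have H_diff : Hf st (Ibv st - theta) - Hf st (Iv st) =
    Cfun alpha c G D t (Ibv st - theta) - Cfun alpha c G D t (Iv st).
  by apply: step_Hf_diff => //; lra.
lra.
Qed.
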